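(* There exists an LCL problem $\Pi$ on undirected paths (without inputs) that can be solved in $O(\log^* n)$ rounds in the LOCAL model, but whose mending requires distance $\Theta(n)$: $\Pi$ is not $T$-mendable for any function $T$ with $T(n)=o(n)$.
   Context: A locally verifiable problem $\Pi$ on a graph family $\mathcal{G}$ is given by a set $\Gamma$ of output labels (here no inputs) and a verifier $\psi$ with verification radius $r\in\mathbb{N}$: for $G=(V,E)\in\mathcal{G}$, an output labeling $\lambda:V\to\Gamma$ and a node $v$, $\psi(G,\lambda,v)\in\{\text{happy},\text{unhappy}\}$ depends only on the radius-$r$ neighborhood of $v$ (structure and outputs, up to isomorphism). $\lambda$ is a solution if $\psi$ is happy at every node. $\Pi$ is an LCL problem if $\Gamma$ is finite and degrees are bounded by a constant. Partial labelings are maps $\lambda:V\to\Gamma\cup\{\bot\}$; the relaxed verifier $\psi^*$ is happy at $v$ if some node within distance $r$ of $v$ has label $\bot$, and otherwise $\psi^*(G,\lambda,v)=\psi(G,\lambda',v)$ for any $\lambda':V\to\Gamma$ agreeing with $\lambda$ on the radius-$r$ neighborhood of $v$; $\psi^*$ accepts $\lambda$ if it is happy at all nodes. Given $\lambda$ accepted by $\psi^*$ and a node $v$, a $t$-mend of $\lambda$ at $v$ is a partial labeling $\mu$ such that $\psi^*$ accepts $\mu$, $\mu(v)\neq\bot$, $\mu(u)=\bot$ implies $\lambda(u)=\bot$, and $\mu(u)\neq\lambda(u)$ implies $u$ is within distance $t$ of $v$. A verifier $\psi$ is $T$-mendable if for every $G\in\mathcal{G}$ with $n$ nodes, every $\lambda$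 accepted by $\psi^*$ and every node $v$, a $T(n)$-mend of $\lambda$ at $v$ exists; $\Pi$ is $T$-mendable if some radius-$r$ verifier for $\Pi$ (accepting exactly the solutions of $\Pi$) is $T$-mendable. LOCAL model: nodes are processors with unique identifiers communicating along edges in synchronous rounds with unbounded message size; a problem is solvable in $T(n)$ rounds if after $T(n)$ rounds all nodes output labels forming a valid solution. *)

From mathcomp Require Import all_boot.
Set Implicit Arguments. Unset Strict Implicit. Unset Printing Implicit Defensive.

(* The n-node undirected path has node set 'I_n and edges {i, i+1}. *)

Definition pdist (n : nat) (u v : 'I_n) : nat := (u - v) + (v - u).

(* Radius-t view of a node v under f : 'I_n -> A, as seen by v.
   left side, listed outward from v: f (v-1), f (v-2), ..., (at most t items)
   right side, listed outward from v: f (v+1), f (v+2), ..., (at most t items)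
   A side shorter than t reveals the end of the path.  Since the path is
   undirected, an (isomorphism-invariant) function of the view must be
   symmetric under exchanging the two sides; see [sym3]. *)
Definition leftv (A : Type) (n : nat) (f : 'I_n -> A) (t : nat) (v : 'I_n)
  : seq A := [seq f i | i : 'I_n <- rev (enum 'I_n) & (i < v) && (v <= i + t)].
Definition rightv (A : Type) (n : nat) (f : 'I_n -> A) (t : nat) (v : 'I_n)
  : seq A := [seq f i | i : 'I_n <- enum 'I_n & (v < i) && (i <= v + t)].

(* A function of a (left, center, right) view that does not depend on the
   orientation, i.e. is well defined on rooted labeled paths up to isomorphism *)
Definition sym3 (A B C : Type) (g : seq A -> B -> seq A -> C) : Prop :=
  forall L c R, g L c R = g R c L.

(* A verifier with output labels Gamma (no inputs). Its radius is given
   separately. *)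
Definition verifier (Gamma : Type) := seq Gamma -> Gamma -> seq Gamma -> bool.

Definition happy (Gamma : Type) (r : nat) (psi : verifier Gamma)
  (n : nat) (lam : 'I_n -> Gamma) (v : 'I_n) : bool :=
  psi (leftv lam r v) (lam v) (rightv lam r v).

Definition solution (Gamma : Type) (r : nat) (psi : verifier Gamma)
  (n : nat) (lam : 'I_n -> Gamma) : Prop :=
  forall v, happy r psi lam v.

(* Relaxed verifier psi^* on partial labelings (None = bottom). *)
Definition rhappy (Gamma : Type) (r : nat) (psi : verifier Gamma)
  (n : nat) (lam : 'I_n -> option Gamma) (v : 'I_n) : bool :=
  let L := leftv lam r v in
  let R := rightv lam r v in
  match lam v with
  | None => true
  | Some c =>
      if all (@isSome Gamma) L && all (@isSome Gamma) R
      then psi (pmap id L) c (pmap id R)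
      else true
  end.

Definition raccepts (Gamma : Type) (r : nat) (psi : verifier Gamma)
  (n : nat) (lam : 'I_n -> option Gamma) : Prop :=
  forall v, rhappy r psi lam v.

Definition is_mend (Gamma : Type) (r : nat) (psi : verifier Gamma)
  (n : nat) (lam : 'I_n -> option Gamma) (v : 'I_n) (t : nat)
  (mu : 'I_n -> option Gamma) : Prop :=
  [/\ raccepts r psi mu,
      mu v <> None,
      (forall u, mu u = None -> lam u = None) &
      (forall u, mu u <> lam u -> pdist u v <= t)].

Definition mendable (Gamma : Type) (r : nat) (psi : verifier Gamma)
  (T : nat -> nat) : Prop :=
  forall (n : nat) (lam : 'I_n -> option Gamma) (v : 'I_n),
    raccepts r psi lam -> exists mu, is_mend r psi lam v (T n) mu.

Definition same_problem (Gamma : Type) (r1 : nat) (psi1 : verifier Gamma)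
  (r2 : nat) (psi2 : verifier Gamma) : Prop :=
  forall (n : nat) (lam : 'I_n -> Gamma),
    solution r1 psi1 lam <-> solution r2 psi2 lam.

Definition problem_mendable (Gamma : Type) (r0 : nat) (psi0 : verifier Gamma)
  (T : nat -> nat) : Prop :=
  exists (r : nat) (psi : verifier Gamma),
    sym3 psi /\ same_problem r psi r0 psi0 /\ mendable r psi T.

(* Deterministic LOCAL algorithm on paths: after t rounds (unbounded messages)
   a node knows n and its radius-t neighborhood together with all IDs in it;
   its output is a function of this knowledge (symmetric since the path has
   no orientation). *)
Definition local_alg (Gamma : Type) := nat -> seq nat -> nat -> seq nat -> Gamma.

Definition run_alg (Gamma : Type) (A : local_alg Gamma) (t : nat)
  (n : nat) (id : 'I_n -> nat) : 'I_n -> Gamma :=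
  fun v => A n (leftv id t v) (id v) (rightv id t v).

Definition solves (Gamma : Type) (r0 : nat) (psi0 : verifier Gamma)
  (c : nat) (A : local_alg Gamma) (time : nat -> nat) : Prop :=
  forall (n : nat) (id : 'I_n -> nat),
    injective id -> (forall v, id v < n ^ c) ->
    solution r0 psi0 (run_alg A (time n) id).

Fixpoint logstar_fuel (fuel n : nat) : nat :=
  match fuel with
  | 0 => 0
  | f.+1 => if n <= 1 then 0 else (logstar_fuel f (trunc_log 2 n)).+1
  end.
Definition logstar (n : nat) : nat := logstar_fuel n n.

Definition bigO (f g : nat -> nat) : Prop :=
  exists C N, forall n, N <= n -> f n <= C * g n.

Definition little_o_n (T : nat -> nat) : Prop :=
  forall k, 0 < k -> exists N, forall n, N <= n -> k * T n <= n.

From mathcomp Require Import all_boot zify.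

Set Implicit Arguments.
Unset Strict Implicit.
Unset Printing Implicit Defensive.

(* The problem "all nodes output the same label" needs no communication at
   all.  Label the left half of a path a, the right half b, and leave only the
   middle node unlabeled: every node whose view is complete sees a constant
   window, so any verifier of the problem accepts this partial labeling.  A
   mend at the middle node must produce a complete labeling, i.e. a solution,
   which is constant; hence one of the two ends, at distance n/2 from the
   middle node, has to be relabeled. *)

Definition agreement (Gamma : eqType) : verifier Gamma :=
  fun L c R => all (eq_op c) L && all (eq_op c) R.

Lemma sym3_agreement (Gamma : eqType) : sym3 (@agreement Gamma).
Proof. by move=> L c R; rewrite /agreement andbC. Qed.

Lemma agreement_const (Gamma : eqType) r n (c : Gamma) :
  solution r (@agreement Gamma) (fun _ : 'I_n => c).
Proof.
move=> v; rewrite /happy /agreement /leftv /rightv !all_map.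
by apply/andP; split; apply/allP => i _ /=.
Qed.

Lemma agreement_solution_succ (Gamma : eqType) r n (f : 'I_n -> Gamma) (i j : 'I_n) :
  0 < r -> solution r (@agreement Gamma) f -> j = i.+1 :> nat -> f j = f i.
Proof.
move=> r_gt0 sol ji; have /andP [_ /allP right_eq] := sol i.
apply/esym/eqP/right_eq/map_f.
by rewrite mem_filter mem_enum andbT; apply/andP; split; lia.
Qed.

Lemma agreement_solution_const (Gamma : eqType) r n (f : 'I_n -> Gamma) :
  0 < r -> solution r (@agreement Gamma) f -> forall i j, f i = f j.
Proof.
move=> r_gt0 sol.
have shift k : forall i j : 'I_n, j = i + k :> nat -> f j = f i.
  elim: k => [|k IH] i j ji; first by congr f; apply: val_inj => /=; rewrite ji addn0.
  have ik : i + k < n by have := ltn_ord j; lia.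
  rewrite (@agreement_solution_succ _ _ _ _ (Ordinal ik) j r_gt0 sol) ?ji ?addnS //.
  exact: IH.
move=> i j; wlog ij : i j / i <= j.
  by move=> sym; case: (leqP i j) => [/sym // | /ltnW /sym ->].
by apply/esym/(shift (j - i)); rewrite subnKC.
Qed.

Lemma leftv_map_in (A B : Type) n t (v : 'I_n) (f : 'I_n -> A) (g : 'I_n -> B)
    (h : B -> A) :
  (forall i, pdist i v <= t -> f i = h (g i)) -> leftv f t v = map h (leftv g t v).
Proof.
move=> fE; rewrite /leftv -map_comp; apply/eq_in_map => i.
by rewrite mem_filter => /andP [/andP [iv vi] _]; apply: fE; rewrite /pdist; lia.
Qed.

Lemma rightv_map_in (A B : Type) n t (v : 'I_n) (f : 'I_n -> A) (g : 'I_n -> B)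
    (h : B -> A) :
  (forall i, pdist i v <= t -> f i = h (g i)) -> rightv f t v = map h (rightv g t v).
Proof.
move=> fE; rewrite /rightv -map_comp; apply/eq_in_map => i.
by rewrite mem_filter => /andP [/andP [vi iv] _]; apply: fE; rewrite /pdist; lia.
Qed.

Lemma rhappy_hole (Gamma : Type) r (psi : verifier Gamma) n
    (lam : 'I_n -> option Gamma) (i v : 'I_n) :
  pdist i v <= r -> lam i = None -> rhappy r psi lam v.
Proof.
rewrite /pdist => near hole; rewrite /rhappy /leftv /rightv !all_map.
case lv: (lam v) => [c|] //.
have [iv|vi|/val_inj iv] := ltngtP i v; last by rewrite -iv hole in lv.
- rewrite (_ : all _ _ = false) //; apply/negbTE/allPn; exists i; last by rewrite /= hole.
  by rewrite mem_filter mem_rev mem_enum iv andbT /=; lia.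
- rewrite andbC (_ : all _ _ = false) //; apply/negbTE/allPn; exists i; last by rewrite /= hole.
  by rewrite mem_filter mem_enum vi andbT /=; lia.
Qed.

Lemma rhappy_full (Gamma : Type) r (psi : verifier Gamma) n
    (lam : 'I_n -> option Gamma) (f : 'I_n -> Gamma) (v : 'I_n) :
  (forall i, pdist i v <= r -> lam i = Some (f i)) ->
  rhappy r psi lam v = happy r psi f v.
Proof.
move=> lamE; have lvE : lam v = Some (f v) by apply: lamE; rewrite /pdist subnn.
rewrite /rhappy /happy lvE (leftv_map_in lamE) (rightv_map_in lamE).
have somes (s : seq Gamma) : all isSome (map Some s) by elim: s.
by rewrite !somes !(map_pK (f := id) (fun _ => erefl)).
Qed.

Lemma raccepts_total_solution (Gamma : Type) r (psi : verifier Gamma) n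
    (mu : 'I_n -> option Gamma) (f : 'I_n -> Gamma) :
  (forall u, mu u = Some (f u)) -> raccepts r psi mu -> solution r psi f.
Proof. by move=> muE acc u; rewrite -(rhappy_full _ (fun i _ => muE i)). Qed.

Lemma mend_total (Gamma : Type) r (psi : verifier Gamma) n
    (lam mu : 'I_n -> option Gamma) v t :
  (forall u, lam u = None -> u = v) -> is_mend r psi lam v t mu ->
  forall u, mu u <> None.
Proof.
move=> holes [_ muv mu_lam _] u mu0.
by apply: muv; rewrite -(holes _ (mu_lam _ mu0)).
Qed.

Section SplitLabeling.

Variables (Gamma : eqType) (r0 r : nat) (psi : verifier Gamma).
Hypothesis r0_gt0 : 0 < r0.
Hypothesis psi_agreement : same_problem r psi r0 (@agreement Gamma).
Variables a b : Gamma.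

Definition split_labeling m : 'I_(m + m).+1 -> option Gamma :=
  fun i => if i < m then Some a else if i == m :> nat then None else Some b.
Arguments split_labeling : clear implicits.

Definition split_center m : 'I_(m + m).+1 := Ordinal (leq_addr m m : m < (m + m).+1).
Arguments split_center : clear implicits.

Lemma split_labeling_hole m u : split_labeling m u = None -> u = split_center m.
Proof.
by rewrite /split_labeling; case: ltnP => // _; case: eqP => // um _; apply: val_inj.
Qed.

Lemma split_labeling_accepted m : raccepts r psi (split_labeling m).
Proof.
move=> u; have [near|far] := leqP (pdist (split_center m) u) r.
  by apply: (rhappy_hole _ near); rewrite /split_labeling /= ltnn eqxx.
pose c := if u < m then a else b.
have const_sol : solution r psi (fun _ : 'I_(m + m).+1 => c).
  exact/psi_agreement/agreement_const.
rewrite (rhappy_full psi (f := fun _ => c)) ?const_sol //.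
move=> i near; rewrite /split_labeling /c /pdist /= in far near *.
case: (ltnP u m) => um; first by have -> : i < m by lia.
have -> : (i < m) = false by lia.
by have -> : (i == m :> nat) = false by lia.
Qed.

Lemma split_mend_far m t mu :
  a != b -> is_mend r psi (split_labeling m) (split_center m) t mu -> m <= t.
Proof.
move=> ab mend; have total := mend_total (@split_labeling_hole m) mend.
case: mend => acc _ _ far.
pose f u := odflt a (mu u).
have muE u : mu u = Some (f u) by rewrite /f; case: (mu u) (total u).
have /psi_agreement sol := raccepts_total_solution muE acc.
rewrite leqNgt; apply/negP => tm.
have kept u : pdist u (split_center m) = m -> mu u = split_labeling m u.
  by move=> du; apply/eqP; apply: contraT => /eqP /far; lia.
have fa : Some (f ord0) = Some a.
  rewrite -muE kept; last by rewrite /pdist /=; lia.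
  by rewrite /split_labeling /= ifT //; lia.
have fb : Some (f ord_max) = Some b.
  rewrite -muE kept; last by rewrite /pdist /=; lia.
  by rewrite /split_labeling /= !ifF //; lia.
move: ab; case: fa fb => <- [<-].
by rewrite (agreement_solution_const r0_gt0 sol ord0 ord_max) eqxx.
Qed.

Lemma agreement_not_sublinear_mendable T :
  a != b -> little_o_n T -> ~ mendable r psi T.
Proof.
move=> ab /(_ 4 isT) [N small] mend; set m := N.+1.
have Tm : T (m + m).+1 < m by have := small (m + m).+1; lia.
have [mu mu_mend] := mend _ _ (split_center m) (@split_labeling_accepted m).
by have := split_mend_far ab mu_mend; lia.
Qed.

End SplitLabeling.

Theorem theorem7p1 :
  exists (Gamma : finType) (r0 : nat) (psi0 : verifier Gamma),
    sym3 psi0 /\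
    (forall c : nat, exists (A : local_alg Gamma) (time : nat -> nat),
        (forall n, sym3 (A n)) /\ bigO time logstar /\ solves r0 psi0 c A time) /\
    (forall T : nat -> nat, little_o_n T -> ~ problem_mendable r0 psi0 T).
Proof.
exists bool, 1, (@agreement bool); split; first exact: sym3_agreement.
split.
  move=> c; exists (fun _ _ _ _ => true), (fun _ => 0).
  split=> //; split; first by exists 0, 0.
  by move=> n id _ _; apply: agreement_const.
move=> T small [r [psi [_ [psi_agreement mend]]]].
exact: (agreement_not_sublinear_mendable (isT : 0 < 1) psi_agreement (isT : true != false) small mend).
Qed.
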